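(* Let $\mathbb{A}$ be a non-empty set, $C$ a finite semigroup and $\varphi:\mathbb{A}^+\to C$ a semigroup morphism. Then every $x\in\mathbb{A}^\omega$ has a suffix $x'$ which admits a $\varphi$-ultra monochromatic factorization.
   Context: $\mathbb{A}^+$ is the free semigroup of non-empty finite words over $\mathbb{A}$ (with concatenation); $\mathbb{A}^\omega$ is the set of right-infinite words over $\mathbb{A}$. A suffix of $x=x_0x_1\cdots$ is $x_nx_{n+1}\cdots$ for some $n\ge0$. A factorization $x'=V_0V_1V_2\cdots$ with all $V_i\in\mathbb{A}^+$ is $\varphi$-ultra monochromatic if there is $c\in C$ such that for all $k\ge1$, all $0\le n_1<n_2<\cdots<n_k$ and all permutations $\sigma$ of $\{1,\dots,k\}$, $\varphi(V_{n_{\sigma(1)}}V_{n_{\sigma(2)}}\cdots V_{n_{\sigma(k)}})=c$. *)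

From mathcomp Require Import all_boot.
Set Implicit Arguments. Unset Strict Implicit. Unset Printing Implicit Defensive.

(* Finite words are [seq A]; non-empty finite words (elements of A^+) are
   those of positive size.  Right-infinite words (A^omega) are [nat -> A]. *)

Definition semigroup_law (C : Type) (op : C -> C -> C) : Prop :=
  forall a b c, op a (op b c) = op (op a b) c.

(* [phi] is a semigroup morphism from A^+ (non-empty words, concatenation)
   to (C, op); only its values on non-empty words are relevant. *)
Definition semigroup_morphism (A C : Type) (op : C -> C -> C)
  (phi : seq A -> C) : Prop :=
  forall u v : seq A, 0 < size u -> 0 < size v ->
    phi (u ++ v) = op (phi u) (phi v).

Definition suffix_at (A : Type) (x : nat -> A) (n : nat) : nat -> A :=
  fun i => x (n + i).

Definition fact_pos (A : Type) (V : nat -> seq A) (k : nat) : nat :=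
  \sum_(j < k) size (V j).

Definition is_factorization (A : Type) (y : nat -> A) (V : nat -> seq A)
  : Prop :=
  (forall k, 0 < size (V k)) /\
  (forall k i (hi : i < size (V k)),
     y (fact_pos V k + i) = nth (y (fact_pos V k + i)) (V k) i).

Definition ultra_monochromatic (A C : Type) (phi : seq A -> C)
  (V : nat -> seq A) : Prop :=
  exists c : C, forall s : seq nat, 0 < size s -> sorted ltn s ->
    forall t : seq nat, perm_eq t s -> phi (flatten (map V t)) = c.

(* Colour each pair i < j of positions of x by phi(x_i ... x_{j-1}).  By the
   infinite Ramsey theorem there are positions h_0 < h_1 < ... all of whose
   pairs get the same colour c.  Cutting the suffix from h_0 at the h_k gives
   blocks V_k with phi(V_k) = c, and c is idempotent since
   c = phi(V_0 V_1) = c c.  Hence every product of blocks, in any order, has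
   image c. *)

From Stdlib Require Import Classical ClassicalEpsilon.
From mathcomp Require Import all_boot.
From mathcomp Require Import zify.
Set Implicit Arguments.
Unset Strict Implicit.
Unset Printing Implicit Defensive.

Definition infinitely_often (P : nat -> Prop) : Prop :=
  forall m, exists2 n, m <= n & P n.

Lemma infinitely_often_True : infinitely_often (fun _ => True).
Proof. by move=> m; exists m. Qed.

Lemma infinitely_often_pigeonhole_seq (C : eqType) (P : nat -> Prop)
    (f : nat -> C) (s : seq C) :
  infinitely_often (fun n => P n /\ f n \in s) ->
  exists2 c, c \in s & infinitely_often (fun n => P n /\ f n = c).
Proof.
elim: s => [|c s IHs] infPs; first by case: (infPs 0) => n _ [].
case: (classic (infinitely_often (fun n => P n /\ f n = c))) => [infPc|finPc].
  by exists c; rewrite ?mem_head.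
have [m hm] : exists m, forall n, m <= n -> P n -> f n != c.
  apply: NNPP => nobound; apply: finPc => k.
  apply: NNPP => noPc; apply: nobound; exists k => n hkn Pn.
  by apply/eqP => fnc; apply: noPc; exists n.
have [|c' c's infPc'] := IHs.
  move=> k; have [n hn [Pn]] := infPs (maxn m k).
  rewrite in_cons; case/orP => [/eqP fnc|fns].
    by have := hm n (leq_trans (leq_maxl m k) hn) Pn; rewrite fnc eqxx.
  by exists n => //; apply: leq_trans hn; apply: leq_maxr.
by exists c' => //; rewrite in_cons c's orbT.
Qed.

Lemma infinitely_often_pigeonhole (C : finType) (P : nat -> Prop)
    (f : nat -> C) :
  infinitely_often P -> exists c, infinitely_often (fun n => P n /\ f n = c).
Proof.
move=> infP; have [|c _ infPc] := @infinitely_often_pigeonhole_seq _ P f (enum C).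
  by move=> m; have [n hn Pn] := infP m; exists n; rewrite ?mem_enum.
by exists c.
Qed.

Lemma infinitely_often_subsequence (P : nat -> Prop) :
  infinitely_often P -> exists g : nat -> nat,
    (forall i, g i < g i.+1) /\ (forall i, P (g i)).
Proof.
move=> infP.
have next m : {n | m <= n /\ P n}.
  by apply: constructive_indefinite_description; have [n] := infP m; exists n.
pose g i := iter i (fun n => sval (next n.+1)) (sval (next 0)).
exists g; split=> [i|]; first by case: (svalP (next (g i).+1)).
by case=> [|i]; [case: (svalP (next 0)) | case: (svalP (next (g i).+1))].
Qed.

Definition infinite_set := {P : nat -> Prop | infinitely_often P}.

Section Ramsey.
Variables (C : finType) (col : nat -> nat -> C).

Lemma ramsey_refine (P : nat -> Prop) : infinitely_often P ->
  exists a, exists Q : nat -> Prop, [/\ P a, infinitely_often Q,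
    forall n, Q n -> P n /\ a < n & exists d, forall n, Q n -> col a n = d].
Proof.
move=> infP; have [a _ Pa] := infP 0.
have infPa : infinitely_often (fun n => P n /\ a < n).
  move=> m; have [n hn Pn] := infP (maxn m a.+1).
  exists n; first by apply: leq_trans hn; apply: leq_maxl.
  by split=> //; apply: leq_trans hn; apply: leq_maxr.
have [d infPad] := infinitely_often_pigeonhole (col a) infPa.
exists a, (fun n => (P n /\ a < n) /\ col a n = d).
by split=> //; [move=> n [] | exists d => n []].
Qed.

(* The classical diagonal construction: nested infinite sets P_0 ⊇ P_1 ⊇ ...
   with a_k ∈ P_k, P_{k+1} > a_k and col a_k constant (= d_k) on P_{k+1}. *)
Lemma ramsey_prehomogeneous : exists (a : nat -> nat) (d : nat -> C),
  forall k j, k < j -> a k < a j /\ col (a k) (a j) = d k.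
Proof.
have step (P : infinite_set) : {aQd : nat * infinite_set * C |
    let: (a, Q, d) := aQd in [/\ sval P a,
      forall n, sval Q n -> sval P n /\ a < n &
      forall n, sval Q n -> col a n = d]}.
  apply: constructive_indefinite_description.
  have [a [Q [Pa infQ QP [d Qd]]]] := ramsey_refine (svalP P).
  by exists (a, exist _ Q infQ, d).
pose Ps k := iter k (fun P => (sval (step P)).1.2)
  (exist infinitely_often _ infinitely_often_True).
pose a k := (sval (step (Ps k))).1.1.
pose d k := (sval (step (Ps k))).2.
have stepP k : [/\ sval (Ps k) (a k),
    forall n, sval (Ps k.+1) n -> sval (Ps k) n /\ a k < n &
    forall n, sval (Ps k.+1) n -> col (a k) n = d k].
  by rewrite /a /d /=; case: (step (Ps k)) => [[[? ?] ?]].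
have Ps_nested k i n : sval (Ps (k + i)) n -> sval (Ps k) n.
  elim: i n => [|i IHi] n; first by rewrite addn0.
  by rewrite addnS; case: (stepP (k + i)) => _ sub _ /sub [/IHi].
exists a, d => k j hkj.
have Pj : sval (Ps k.+1) (a j).
  by apply: (Ps_nested _ (j - k.+1)); rewrite subnKC //; case: (stepP j).
by case: (stepP k) => _ sub dk; split; [case: (sub _ Pj) | apply: dk].
Qed.

Theorem ramsey_pairs : exists (h : nat -> nat) (c : C),
  (forall i, h i < h i.+1) /\ (forall i j, i < j -> col (h i) (h j) = c).
Proof.
have [a [d prehom]] := ramsey_prehomogeneous.
have [c infdc] := infinitely_often_pigeonhole d infinitely_often_True.
have [g [g_incr gdc]] := infinitely_often_subsequence infdc.
have g_mono := homo_ltn ltn_trans g_incr.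
exists (a \o g), c; split=> [i|i j hij]; first by case: (prehom _ _ (g_incr i)).
by have [_ ->] := prehom _ _ (g_mono _ _ hij); case: (gdc i).
Qed.

End Ramsey.

Definition segment (A : Type) (x : nat -> A) (i j : nat) : seq A :=
  mkseq (fun t => x (i + t)) (j - i).

Lemma size_segment (A : Type) (x : nat -> A) i j :
  size (segment x i j) = j - i.
Proof. exact: size_mkseq. Qed.

Lemma segment_cat (A : Type) (x : nat -> A) i j k : i <= j -> j <= k ->
  segment x i k = segment x i j ++ segment x j k.
Proof.
move=> hij hjk; apply: (@eq_from_nth _ (x 0)).
  by rewrite size_cat !size_segment; lia.
move=> n; rewrite size_segment => hn; rewrite nth_cat size_segment.
by case: ifP => hnj; rewrite !nth_mkseq //; [congr x | ..]; lia.
Qed.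

Section CutAtIncreasingPositions.
Variables (A : Type) (x : nat -> A) (h : nat -> nat).
Hypothesis h_incr : forall k, h k < h k.+1.

Let blocks k := segment x (h k) (h k.+1).

Let h_mono : {homo h : i j / i <= j} :=
  homo_leq leqnn leq_trans (fun k => ltnW (h_incr k)).

Lemma fact_pos_segments k : fact_pos blocks k = h k - h 0.
Proof.
elim: k => [|k IHk]; first by rewrite /fact_pos big_ord0 subnn.
rewrite /fact_pos big_ord_recr /= -/(fact_pos _ _) IHk size_segment.
by have := h_incr k; have := h_mono (leq0n k); lia.
Qed.

Lemma is_factorization_segments : is_factorization (suffix_at x (h 0)) blocks.
Proof.
split=> [k|k i]; first by rewrite size_segment subn_gt0.
rewrite fact_pos_segments size_segment => hi; rewrite nth_mkseq //.
by rewrite /suffix_at; congr x; have := h_mono (leq0n k); lia.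
Qed.

End CutAtIncreasingPositions.

Lemma morphism_flatten_idempotent (A C : Type) (op : C -> C -> C)
    (phi : seq A -> C) (V : nat -> seq A) (c : C) :
  semigroup_morphism op phi -> op c c = c ->
  (forall k, 0 < size (V k)) -> (forall k, phi (V k) = c) ->
  forall t, 0 < size t -> phi (flatten (map V t)) = c.
Proof.
move=> hphi idem V_ne phiV; elim=> // k t IHt _ /=.
case: t IHt => [|k' t] IHt; first by rewrite cats0.
by rewrite hphi ?IHt ?phiV //= size_cat ltn_addr.
Qed.

Theorem proposition2p3 (A : Type) (hA : inhabited A) (C : finType)
  (op : C -> C -> C) (hC : semigroup_law op)
  (phi : seq A -> C) (hphi : semigroup_morphism op phi)
  (x : nat -> A) :
  exists n : nat, exists V : nat -> seq A,
    is_factorization (suffix_at x n) V /\ ultra_monochromatic phi V.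
Proof.
have [h [c [h_incr homog]]] := ramsey_pairs (fun i j => phi (segment x i j)).
pose V k := segment x (h k) (h k.+1).
have V_ne k : 0 < size (V k) by rewrite size_segment subn_gt0.
have phiV k : phi (V k) = c by apply: homog.
have idem : op c c = c.
  rewrite -{1}(phiV 0) -{1}(phiV 1) -hphi ?V_ne // -segment_cat.
  - exact: homog.
  - exact: ltnW (h_incr 0).
  - exact: ltnW (h_incr 1).
exists (h 0), V; split; first exact: is_factorization_segments.
exists c => s s_ne _ t perm_ts.
apply: (morphism_flatten_idempotent hphi idem V_ne phiV).
by rewrite (perm_size perm_ts).
Qed.
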